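(* Let $X$ be a topological space in which every open set is a union of countably many clopen sets. The following are equivalent: (1) every subspace of $X$ satisfies $\mathsf{U}_{fin}(\mathrm{O},\Gamma)$; (2) every $G_\delta$ subset of $X$ satisfies $\mathsf{U}_{fin}(\mathrm{O},\Gamma)$; (3) for every continuous $\Psi:X\to\mathrm{EF}$, $\Psi[X]$ is bounded; (4) $X$ satisfies $\mathsf{U}_{fin}(\mathrm{O},\Gamma)$ and $X$ is a $\sigma$ space.
   Context: A cover $\mathcal{U}$ of a space $Y$ is point-cofinite if it is infinite and each point of $Y$ belongs to all but finitely many members of $\mathcal{U}$. A space $Y$ satisfies $\mathsf{U}_{fin}(\mathrm{O},\Gamma)$ if whenever $\mathcal{U}_1,\mathcal{U}_2,\dots$ are countable open covers of $Y$ none of which contains a finite subcover, there are finite $\mathcal{F}_n\subseteq\mathcal{U}_n$ such that $\{\bigcup\mathcal{F}_n:n\in\mathbb{N}\}$ is a point-cofinite cover of $Y$. A space is a $\sigma$ space if each of its $G_\delta$ subsets is $F_\sigma$. Let $\overline{\mathbb{N}}=\mathbb{N}\cup\{\infty\}$ be the one-point compactification of $\mathbb{N}$, with $\overline{\mathbb{N}}^{\mathbb{N}}$ carrying the product topology; $\mathrm{EF}\subseteq\overline{\mathbb{N}}^{\mathbb{N}}$ is the subspace of those $f$ with $f(n)<\infty$ for all but finitely many $n$. A set $Y\subseteq\mathrm{EF}$ is bounded if there is $g\in\mathbb{N}^{\mathbb{N}}$ such that for each $f\in Y$, $f(n)\le g(n)$ for all but finitely many $n$. *)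

From Stdlib Require Import Arith List.
Import ListNotations.

Record topology (X : Type) := Topology {
  open : (X -> Prop) -> Prop;
  open_full : open (fun _ => True);
  open_inter : forall U V, open U -> open V -> open (fun x => U x /\ V x);
  open_union : forall F : (X -> Prop) -> Prop,
      (forall U, F U -> open U) -> open (fun x => exists U, F U /\ U x)
}.
Arguments open {X} t U.

Definition closed {X : Type} (T : topology X) (F : X -> Prop) : Prop :=
  open T (fun x => ~ F x).

Definition clopen {X : Type} (T : topology X) (C : X -> Prop) : Prop :=
  open T C /\ closed T C.

Definition Gdelta {X : Type} (T : topology X) (Y : X -> Prop) : Prop :=
  exists O : nat -> X -> Prop, (forall n, open T (O n)) /\
    (forall x, Y x <-> forall n, O n x).

Definition Fsigma {X : Type} (T : topology X) (Y : X -> Prop) : Prop :=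
  exists F : nat -> X -> Prop, (forall n, closed T (F n)) /\
    (forall x, Y x <-> exists n, F n x).

Definition sigma_space {X : Type} (T : topology X) : Prop :=
  forall Y, Gdelta T Y -> Fsigma T Y.

(* ---- Subspace Y of X (subspace topology). Subsets of Y are represented by
   subsets of X, identified when they agree on Y. ---- *)
Definition rel_eq {X : Type} (Y A B : X -> Prop) : Prop :=
  forall y, Y y -> (A y <-> B y).

Definition rel_open {X : Type} (T : topology X) (Y V : X -> Prop) : Prop :=
  exists O, open T O /\ rel_eq Y V O.

Definition covers {X : Type} (Y : X -> Prop) (U : nat -> X -> Prop) : Prop :=
  forall y, Y y -> exists n, U n y.

Definition has_finite_subcover {X : Type} (Y : X -> Prop) (U : nat -> X -> Prop) : Prop :=
  exists l : list nat, forall y, Y y -> exists n, In n l /\ U n y.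

Definition infinite_family {X : Type} (Y : X -> Prop) (W : nat -> X -> Prop) : Prop :=
  ~ exists L : list nat, forall k, exists j, In j L /\ rel_eq Y (W k) (W j).

Definition point_cofinite {X : Type} (Y : X -> Prop) (W : nat -> X -> Prop) : Prop :=
  infinite_family Y W /\
  forall y, Y y -> exists L : list nat,
    forall k, ~ W k y -> exists j, In j L /\ rel_eq Y (W k) (W j).

(* U_fin(O, Gamma) for the subspace Y of X.  A countable open cover is given as
   (the range of) a sequence of open subsets of Y; a finite subfamily F_k of
   U_k is given by a finite list of indices. *)
Definition Ufin_O_Gamma {X : Type} (T : topology X) (Y : X -> Prop) : Prop :=
  forall U : nat -> nat -> X -> Prop,
    (forall k n, rel_open T Y (U k n)) ->
    (forall k, covers Y (U k)) ->
    (forall k, ~ has_finite_subcover Y (U k)) ->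
    exists F : nat -> list nat,
      point_cofinite Y (fun k x => exists n, In n (F k) /\ U k n x).

(* ---- Nbar = N ∪ {∞} as option nat (None = ∞), one-point compactification of
   discrete N: U is open iff (∞ ∈ U -> U contains a cofinal segment of N). ---- *)
Definition nbar := option nat.

Definition nbar_open (U : nbar -> Prop) : Prop :=
  U None -> exists N, forall n, N <= n -> U (Some n).

Definition basic_nbhd (l : list (nat * (nbar -> Prop))) (g : nat -> nbar) : Prop :=
  forall p, In p l -> snd p (g (fst p)).

Definition prod_open (W : (nat -> nbar) -> Prop) : Prop :=
  forall f, W f -> exists l : list (nat * (nbar -> Prop)),
    (forall p, In p l -> nbar_open (snd p)) /\ basic_nbhd l f /\
    (forall g, basic_nbhd l g -> W g).

Definition EF (f : nat -> nbar) : Prop :=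
  exists N, forall n, N <= n -> f n <> None.

Definition EF_open (V : (nat -> nbar) -> Prop) : Prop :=
  exists O, prod_open O /\ forall f, EF f -> (V f <-> O f).

Definition continuous_to_EF {X : Type} (T : topology X) (Psi : X -> nat -> nbar) : Prop :=
  (forall x, EF (Psi x)) /\
  (forall V, EF_open V -> open T (fun x => V (Psi x))).

Definition nbar_le (a : nbar) (m : nat) : Prop :=
  match a with Some k => k <= m | None => False end.

Definition bounded (Y : (nat -> nbar) -> Prop) : Prop :=
  exists g : nat -> nat, forall f, Y f ->
    exists N, forall n, N <= n -> nbar_le (f n) (g n).

(* Work with a nested form of U_fin(O,Γ): for open covers [U k n] of [Y],
   increasing in [n] and decreasing in [k], some [h] puts every point of [Y] eventually in
   [U k (h k)].  It is equivalent to U_fin(O,Γ): monotonise the given covers one way, pass to a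
   subsequence of pairwise distinct members of a point-cofinite cover the other way.
   (2)->(3): the tails [{y | Psi y (m+n) < ∞ for all n}] are G_delta; the nested form applied to
   the covers [{y | Psi y (m+k) = n}] bounds each tail, and one diagonal bound dominates all tails.
   (3)->(4): as open sets are countable unions of clopen sets, "index of the first clopen piece
   containing x" is a continuous map into Nbar, and every closed set is the preimage of ∞ under
   such a map.  Bounding the map that records the first piece of each cover gives U_fin(O,Γ)
   for X; a bound for a map whose only ∞ coordinate tells where a point leaves a G_delta set
   exhibits that set as F_sigma.
   (4)->(1): [Y] lies in the G_delta set [∩_k ∪_n U k n], a union of closed sets [F m];
   adding the complement of [F 0 ∪ ... ∪ F k] to the k-th cover makes it a cover of X. *)
From Stdlib Require Import Arith List Lia Cantor Classical ClassicalEpsilon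
  FunctionalExtensionality PropExtensionality.

Lemma le_list_max (l : list nat) n : In n l -> n <= list_max l.
Proof.
  intros Hn. assert (Hall : Forall (fun k => k <= list_max l) l) by (apply list_max_le; lia).
  exact (proj1 (Forall_forall _ l) Hall n Hn).
Qed.

Lemma fst_of_nat_le p : fst (Cantor.of_nat p) <= p.
Proof.
  pose proof (Cantor.to_nat_non_decreasing (fst (Cantor.of_nat p)) (snd (Cantor.of_nat p))) as H.
  rewrite <- surjective_pairing, Cantor.cancel_to_of in H. lia.
Qed.

Lemma eventually_forall_in {A : Type} (L : list A) (P : A -> nat -> Prop) :
  (forall a, In a L -> exists N, forall k, N <= k -> P a k) ->
  exists N, forall a, In a L -> forall k, N <= k -> P a k.
Proof.
  induction L as [|a L IH]; intros H.
  - exists 0. intros b [].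
  - destruct IH as [N1 H1]; [intros b Hb; apply H; right; exact Hb |].
    destruct (H a (or_introl eq_refl)) as [N2 H2].
    exists (max N1 N2). intros b [<- | Hb] k Hk; [apply H2 | apply H1]; auto; lia.
Qed.

Lemma diagonal_dominates (h : nat -> nat -> nat) :
  exists g : nat -> nat, forall m k, h m k <= g (m + k).
Proof.
  exists (fun n => list_max (map (fun m => h m (n - m)) (seq 0 (S n)))).
  intros m k. replace (h m k) with (h m (m + k - m)) by (f_equal; lia).
  apply le_list_max.
  change (h m (m + k - m)) with ((fun m' => h m' (m + k - m')) m).
  apply in_map, in_seq. lia.
Qed.

Section OpenSets.
Context {X : Type} (T : topology X).

Lemma open_ext (U V : X -> Prop) : (forall x, U x <-> V x) -> open T U -> open T V.
Proof.
  intros HUV HU. replace V with U; [exact HU |].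
  apply functional_extensionality; intro x; apply propositional_extensionality, HUV.
Qed.

Lemma open_const (P : Prop) : open T (fun _ => P).
Proof.
  destruct (classic P) as [HP | HP].
  - apply (open_ext (fun _ => True)); [tauto | apply open_full].
  - apply (open_ext (fun x => exists U, False /\ U x)).
    + intro x; split; [intros [U [[] _]] | tauto].
    + apply open_union; tauto.
Qed.

Lemma open_exists (P : nat -> X -> Prop) :
  (forall i, open T (P i)) -> open T (fun x => exists i, P i x).
Proof.
  intros HP. apply (open_ext (fun x => exists U, (exists i, U = P i) /\ U x)).
  - intro x; split.
    + intros [U [[i ->] HU]]; eauto.
    + intros [i Hi]; exists (P i); eauto.
  - apply open_union; intros U [i ->]; apply HP.
Qed.

Lemma open_or (U V : X -> Prop) : open T U -> open T V -> open T (fun x => U x \/ V x).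
Proof.
  intros HU HV. apply (open_ext (fun x => exists i, match i with 0 => U x | _ => V x end)).
  - intro x; split; [intros [[|i] H]; auto | intros [H | H]; [exists 0 | exists 1]; exact H].
  - apply open_exists; intros [|i]; assumption.
Qed.

Lemma open_forall_lt (P : nat -> X -> Prop) K :
  (forall i, i < K -> open T (P i)) -> open T (fun x => forall i, i < K -> P i x).
Proof.
  induction K as [|K IH]; intros HP.
  - apply (open_ext (fun _ => True)); [intro x; split; [intros _ i Hi; lia | tauto] | apply open_full].
  - apply (open_ext (fun x => (forall i, i < K -> P i x) /\ P K x)).
    + intro x; split.
      * intros [H1 H2] i Hi. destruct (Nat.eq_dec i K) as [-> | Hne]; [exact H2 | apply H1; lia].
      * intros H; split; [intros i Hi; apply H | apply H]; lia.
    + apply open_inter; [apply IH; intros i Hi |]; apply HP; lia.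
Qed.

Lemma open_forall_le (P : nat -> X -> Prop) K :
  (forall i, i <= K -> open T (P i)) -> open T (fun x => forall i, i <= K -> P i x).
Proof.
  intros HP. apply (open_ext (fun x => forall i, i < S K -> P i x)).
  - intro x; split; intros H i Hi; apply H; lia.
  - apply open_forall_lt; intros i Hi; apply HP; lia.
Qed.

Lemma closed_compl (U : X -> Prop) : open T U -> closed T (fun x => ~ U x).
Proof. intros HU. apply (open_ext U); [intro x; tauto | exact HU]. Qed.

Lemma closed_and (A B : X -> Prop) :
  closed T A -> closed T B -> closed T (fun x => A x /\ B x).
Proof. intros HA HB. apply (open_ext (fun x => ~ A x \/ ~ B x)); [intro x; tauto | apply open_or; assumption]. Qed.

Lemma clopen_ext (U V : X -> Prop) : (forall x, U x <-> V x) -> clopen T U -> clopen T V.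
Proof.
  intros HUV [HU HcU]. split; [apply (open_ext U) | apply (open_ext (fun x => ~ U x))]; auto.
  intro x; rewrite HUV; tauto.
Qed.

End OpenSets.

Section FirstIndex.
Context {X : Type}.

Definition least (D : nat -> X -> Prop) (x : X) (p : nat) : Prop :=
  D p x /\ forall q, q < p -> ~ D q x.

Lemma least_exists (D : nat -> X -> Prop) x : (exists p, D p x) -> exists p, least D x p.
Proof.
  intros [p Hp]. induction p as [p IH] using (well_founded_induction lt_wf).
  destruct (classic (exists q, q < p /\ D q x)) as [[q [Hq Dq]] | Hn].
  - exact (IH q Hq Dq).
  - exists p; split; [exact Hp | intros q Hq Dq; apply Hn; eauto].
Qed.

Lemma least_unique (D : nat -> X -> Prop) x p q : least D x p -> least D x q -> p = q.
Proof.
  intros [Dp Hp] [Dq Hq].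
  destruct (lt_eq_lt_dec p q) as [[H | H] | H]; [exfalso; apply (Hq p) | | exfalso; apply (Hp q)]; auto.
Qed.

Lemma least_clopen (T : topology X) (D : nat -> X -> Prop) p :
  (forall q, clopen T (D q)) -> clopen T (fun x => least D x p).
Proof.
  intros HD. split.
  - apply open_inter; [apply HD | apply open_forall_lt; intros q _; apply HD].
  - apply (open_ext T (fun x => ~ D p x \/ exists q, q < p /\ D q x)).
    + intro x; unfold least; split.
      * intros [H | [q [Hq Dq]]] [Dp Hp]; [exact (H Dp) | exact (Hp q Hq Dq)].
      * intros H. destruct (classic (D p x)) as [Dp | Dp]; [right | left; exact Dp].
        apply NNPP; intro Hn. apply H; split; [exact Dp | intros q Hq Dq; apply Hn; eauto].
    + apply open_or; [apply HD | apply open_exists; intro q; apply open_inter; [apply open_const | apply HD]].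
Qed.

Lemma first_index_map (T : topology X) (D : nat -> X -> Prop) :
  (forall q, clopen T (D q)) ->
  exists f : X -> nbar, (forall p, clopen T (fun x => f x = Some p)) /\
    (forall x, f x = None <-> ~ exists p, D p x) /\ (forall x p, f x = Some p -> D p x).
Proof.
  intros HD.
  assert (Hval : forall x, exists a : nbar, forall p, a = Some p <-> least D x p).
  { intro x. destruct (classic (exists p, D p x)) as [Hx | Hx].
    - destruct (least_exists D x Hx) as [p Hp]. exists (Some p). intro q; split.
      + intros E; injection E as <-; exact Hp.
      + intros Hq; f_equal; apply (least_unique D x p q Hp Hq).
    - exists None. intro q; split; [discriminate | intros [Dq _]; exfalso; eauto]. }
  apply choice in Hval; destruct Hval as [f Hf].
  exists f. split; [| split].
  - intro p. apply (clopen_ext T (fun x => least D x p)); [intro x; symmetry; apply Hf | apply least_clopen, HD].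
  - intro x; split.
    + intros E Hx. destruct (least_exists D x Hx) as [p Hp]. apply Hf in Hp. congruence.
    + intros Hx. destruct (f x) as [p |] eqn:E; [exfalso; apply Hx; exists p | reflexivity].
      apply (proj1 (proj1 (Hf x p) E)).
  - intros x p E. apply (proj1 (proj1 (Hf x p) E)).
Qed.

End FirstIndex.

Section MapsToEF.
Context {X : Type} (T : topology X).

Lemma open_preimage_of_clopen_levels (f : X -> nbar) :
  (forall p, clopen T (fun x => f x = Some p)) ->
  forall V, nbar_open V -> open T (fun x => V (f x)).
Proof.
  intros Hf V HV. destruct (classic (V None)) as [HN | HN].
  - destruct (HV HN) as [N HNV].
    apply (open_ext T (fun x => forall p, p < N -> V (Some p) \/ f x <> Some p)).
    + intro x; split.
      * intros H. destruct (f x) as [n |]; [| exact HN].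
        destruct (le_lt_dec N n) as [Hn | Hn]; [apply HNV, Hn |].
        destruct (H n Hn) as [Hv | Hne]; [exact Hv | congruence].
      * intros H p _. destruct (f x) as [n |] eqn:E; [| right; discriminate].
        destruct (Nat.eq_dec n p) as [-> | Hne]; [left; exact H | right; congruence].
    + apply open_forall_lt; intros p _. apply open_or; [apply open_const | apply Hf].
  - apply (open_ext T (fun x => exists p, V (Some p) /\ f x = Some p)).
    + intro x; split.
      * intros [p [Hv ->]]; exact Hv.
      * intros H. destruct (f x) as [n |]; [eauto | contradiction].
    + apply open_exists; intro p. apply open_inter; [apply open_const | apply Hf].
Qed.

Lemma open_basic_nbhd (Psi : X -> nat -> nbar) :
  (forall n V, nbar_open V -> open T (fun x => V (Psi x n))) ->
  forall l, (forall p, In p l -> nbar_open (snd p)) -> open T (fun x => basic_nbhd l (Psi x)).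
Proof.
  intros HPsi. induction l as [| [n V] l IH]; intros Hl.
  - apply (open_ext T (fun _ => True)); [| apply open_full].
    intro x; split; [intros _ p [] | tauto].
  - apply (open_ext T (fun x => V (Psi x n) /\ basic_nbhd l (Psi x))).
    + intro x; unfold basic_nbhd; simpl; split.
      * intros [H1 H2] p [<- | Hp]; [exact H1 | apply H2, Hp].
      * intros H; split; [apply (H (n, V)) | intros p Hp; apply H]; auto.
    + apply open_inter; [apply HPsi, (Hl (n, V)) | apply IH; intros p Hp; apply Hl]; simpl; auto.
Qed.

Lemma continuous_to_EF_of_coords (Psi : X -> nat -> nbar) :
  (forall x, EF (Psi x)) ->
  (forall n V, nbar_open V -> open T (fun x => V (Psi x n))) ->
  continuous_to_EF T Psi.
Proof.
  intros HEF HPsi. split; [exact HEF |]. intros V [O [HO HV]].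
  apply (open_ext T (fun x => exists S, (exists l, (forall p, In p l -> nbar_open (snd p)) /\
           (forall g, basic_nbhd l g -> O g) /\ S = fun y => basic_nbhd l (Psi y)) /\ S x)).
  - intro x. rewrite (HV (Psi x) (HEF x)). split.
    + intros [S [[l [_ [HlO ->]]] Hx]]. apply HlO, Hx.
    + intros Hx. destruct (HO (Psi x) Hx) as [l [Hl [Hxl HlO]]].
      exists (fun y => basic_nbhd l (Psi y)). split; [exists l |]; auto.
  - apply open_union. intros S [l [Hl [_ ->]]]. apply open_basic_nbhd; assumption.
Qed.

Lemma continuous_to_EF_of_clopen_levels (Psi : X -> nat -> nbar) :
  (forall x, EF (Psi x)) -> (forall n p, clopen T (fun x => Psi x n = Some p)) ->
  continuous_to_EF T Psi.
Proof.
  intros HEF Hlev. apply continuous_to_EF_of_coords; [exact HEF |].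
  intros n. apply open_preimage_of_clopen_levels, Hlev.
Qed.

Lemma open_coord_preimage (Psi : X -> nat -> nbar) : continuous_to_EF T Psi ->
  forall n V, nbar_open V -> open T (fun x => V (Psi x n)).
Proof.
  intros [_ HPsi] n V HV.
  apply (open_ext T (fun x => basic_nbhd ((n, V) :: nil) (Psi x))).
  - intro x; unfold basic_nbhd; simpl; split.
    + intros H. apply (H (n, V)); auto.
    + intros H p [<- | []]; exact H.
  - apply HPsi. exists (basic_nbhd ((n, V) :: nil)). split; [| reflexivity].
    intros f Hf. exists ((n, V) :: nil). split; [intros p [<- | []]; exact HV | auto].
Qed.

Lemma closed_tail_bounded (Psi : X -> nat -> nbar) (g : nat -> nat) m :
  continuous_to_EF T Psi -> closed T (fun x => forall c, m <= c -> nbar_le (Psi x c) (g c)).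
Proof.
  intros HPsi. apply (open_ext T (fun x => exists c, m <= c /\ ~ nbar_le (Psi x c) (g c))).
  - intro x; split.
    + intros [c [Hc Hle]] HB. exact (Hle (HB c Hc)).
    + intros HB. apply NNPP; intros Hn. apply HB. intros c Hc. apply NNPP; eauto.
  - apply open_exists; intro c. apply open_inter; [apply open_const |].
    apply (open_coord_preimage Psi HPsi c (fun a => ~ nbar_le a (g c))).
    intros _. exists (S (g c)). intros n Hn; simpl; lia.
Qed.

End MapsToEF.

Section NestedCovers.
Context {X : Type} (T : topology X).

Definition nested (U : nat -> nat -> X -> Prop) : Prop :=
  (forall k n n' x, n <= n' -> U k n x -> U k n' x) /\
  (forall k k' n x, k <= k' -> U k' n x -> U k n x).

Definition Ufin_nested (Y : X -> Prop) : Prop :=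
  forall U : nat -> nat -> X -> Prop,
    (forall k n, open T (U k n)) -> (forall k, covers Y (U k)) -> nested U ->
    exists h : nat -> nat, forall y, Y y -> exists N, forall k, N <= k -> U k (h k) y.

(* Point-cofiniteness counts members only up to equality on [Y]; along a subsequence of
   members pairwise different on [Y] it becomes plain eventual membership. *)
Lemma point_cofinite_subsequence (Y : X -> Prop) (W : nat -> X -> Prop) :
  point_cofinite Y W ->
  exists s : nat -> nat, (forall i, i <= s i) /\
    forall y, Y y -> exists N, forall i, N <= i -> W (s i) y.
Proof.
  intros [Hinf Hcof].
  assert (Hnew : forall B, exists k, forall j, j <= B -> ~ rel_eq Y (W k) (W j)).
  { intro B. apply NNPP; intro Hn. apply Hinf. exists (seq 0 (S B)). intro k.
    apply NNPP; intro Hk. apply Hn. exists k. intros j Hj Heq.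
    apply Hk. exists j. split; [apply in_seq; lia | exact Heq]. }
  apply choice in Hnew; destruct Hnew as [next Hnext].
  assert (Hgt : forall B, B < next B).
  { intro B. destruct (le_lt_dec (next B) B) as [Hle | Hlt]; [| exact Hlt].
    exfalso. apply (Hnext B (next B) Hle). intros y _; reflexivity. }
  set (s := fun i => Nat.iter (S i) next 0).
  assert (Hs : forall i, i <= s i).
  { induction i as [| i IH]; [lia |]. unfold s in *. rewrite Nat.iter_succ.
    specialize (Hgt (Nat.iter (S i) next 0)). lia. }
  exists s. split; [exact Hs |]. intros y Yy.
  destruct (Hcof y Yy) as [L HL]. exists (S (list_max L)). intros [| i] Hi; [lia |].
  apply NNPP; intros Hout. destruct (HL _ Hout) as [j [HjL Heq]].
  apply (Hnext (s i) j); [| exact Heq].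
  pose proof (le_list_max L j HjL). pose proof (Hs i). lia.
Qed.

(* If some cover has no finite subcover, neither has any later one, so U_fin(O,Γ) applies to a tail. *)
Lemma Ufin_O_Gamma_nested (Y : X -> Prop) : Ufin_O_Gamma T Y -> Ufin_nested Y.
Proof.
  intros HY U HU Hcov [Hn Hk].
  destruct (classic (exists k0, ~ has_finite_subcover Y (U k0))) as [[k0 Hk0] | Hfin].
  - destruct (HY (fun k => U (k0 + k))) as [F HF].
    + intros k n. exists (U (k0 + k) n). split; [apply HU | intros y _; reflexivity].
    + intro k; apply Hcov.
    + intros k [l Hl]. apply Hk0. exists l. intros y Yy.
      destruct (Hl y Yy) as [n [Hin HUn]]. exists n. split; [exact Hin |].
      apply (Hk k0 (k0 + k) n); [lia | exact HUn].
    + destruct (point_cofinite_subsequence _ _ HF) as [s [Hs Hev]].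
      exists (fun k => list_max (F (s k))). intros y Yy.
      destruct (Hev y Yy) as [N HN]. exists N. intros k Hk'.
      destruct (HN k Hk') as [n [Hin HUn]].
      apply (Hk k (k0 + s k)); [specialize (Hs k); lia |].
      apply (Hn _ n); [apply le_list_max, Hin | exact HUn].
  - assert (Hall : forall k, exists n, forall y, Y y -> U k n y).
    { intro k. destruct (NNPP _ (fun H => Hfin (ex_intro _ k H))) as [l Hl].
      exists (list_max l). intros y Yy. destruct (Hl y Yy) as [n [Hin HUn]].
      apply (Hn _ n); [apply le_list_max, Hin | exact HUn]. }
    apply choice in Hall; destruct Hall as [h Hh].
    exists h. intros y Yy. exists 0. intros k _. apply Hh, Yy.
Qed.

Definition nested_hull (U : nat -> nat -> X -> Prop) (k n : nat) (x : X) : Prop :=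
  forall i, i <= k -> exists m, m <= n /\ U i m x.

Lemma nested_hull_nested U : nested (nested_hull U).
Proof.
  split.
  - intros k n n' x Hn H i Hi. destruct (H i Hi) as [m [Hm HU]]. exists m. split; [lia | exact HU].
  - intros k k' n x Hk H i Hi. apply H. lia.
Qed.

Lemma nested_hull_open U : (forall k n, open T (U k n)) -> forall k n, open T (nested_hull U k n).
Proof.
  intros HU k n. apply open_forall_le; intros i _.
  apply open_exists; intro m. apply open_inter; [apply open_const | apply HU].
Qed.

Lemma nested_hull_covers (Y : X -> Prop) U :
  (forall k, covers Y (U k)) -> forall k, covers Y (nested_hull U k).
Proof.
  intros Hcov k y Yy.
  destruct (eventually_forall_in (seq 0 (S k)) (fun i n => exists m, m <= n /\ U i m y)) as [N HN].
  - intros i _. destruct (Hcov i y Yy) as [m Hm]. exists m. intros n Hn. exists m. split; assumption.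
  - exists N. intros i Hi. apply HN; [apply in_seq; lia | lia].
Qed.

Lemma Ufin_nested_eventually (Y : X -> Prop) : Ufin_nested Y ->
  forall U, (forall k n, open T (U k n)) -> (forall k, covers Y (U k)) ->
  exists h : nat -> nat, forall y, Y y -> exists N, forall k, N <= k ->
    exists m, m <= h k /\ U k m y.
Proof.
  intros HY U HU Hcov.
  destruct (HY (nested_hull U)) as [h Hh];
    [apply nested_hull_open, HU | apply nested_hull_covers, Hcov | apply nested_hull_nested |].
  exists h. intros y Yy. destruct (Hh y Yy) as [N HN].
  exists N. intros k Hk. apply (HN k Hk k). lia.
Qed.

Lemma Ufin_nested_O_Gamma (Y : X -> Prop) : Ufin_nested Y -> Ufin_O_Gamma T Y.
Proof.
  intros HY U HU Hcov Hnofin.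
  destruct (choice (fun (kn : nat * nat) O => open T O /\ rel_eq Y (U (fst kn) (snd kn)) O))
    as [O HO]; [intros [k n]; apply HU |].
  destruct (Ufin_nested_eventually Y HY (fun k n => O (k, n))) as [h Hh].
  - intros k n. apply HO.
  - intros k y Yy. destruct (Hcov k y Yy) as [n Hn]. exists n. apply (HO (k, n)); assumption.
  - exists (fun k => seq 0 (S (h k))).
    set (W := fun k x => exists n, In n (seq 0 (S (h k))) /\ U k n x).
    assert (Hev : forall y, Y y -> exists N, forall k, N <= k -> W k y).
    { intros y Yy. destruct (Hh y Yy) as [N HN]. exists N. intros k Hk.
      destruct (HN k Hk) as [n [Hn HOn]]. exists n. split; [apply in_seq; lia |].
      apply (HO (k, n)); assumption. }
    split.
    + intros [L HL].
      assert (Hmiss : forall j, exists y, Y y /\ ~ W j y).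
      { intro j. apply NNPP; intro Hn. apply (Hnofin j). exists (seq 0 (S (h j))).
        intros y Yy. apply NNPP; intro Hy. apply Hn. exists y. split; assumption. }
      apply choice in Hmiss; destruct Hmiss as [miss Hmiss].
      destruct (eventually_forall_in L (fun j k => W k (miss j))) as [K HK].
      { intros j _. apply Hev, Hmiss. }
      destruct (HL K) as [j [Hj Heq]]. apply (proj2 (Hmiss j)).
      apply (Heq (miss j) (proj1 (Hmiss j))). apply (HK j Hj K). lia.
    + intros y Yy. destruct (Hev y Yy) as [N HN]. exists (seq 0 N). intros k Hk.
      exists k. split; [| intros z _; reflexivity].
      apply in_seq. destruct (le_lt_dec N k) as [Hle | Hlt]; [exfalso; apply Hk, HN, Hle | lia].
Qed.

End NestedCovers.

Lemma Gdelta_Ufin_bounded {X : Type} (T : topology X) :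
  (forall Y, Gdelta T Y -> Ufin_O_Gamma T Y) ->
  forall Psi, continuous_to_EF T Psi -> bounded (fun f => exists x, f = Psi x).
Proof.
  intros HG Psi HPsi.
  assert (Htail : forall m, exists h : nat -> nat, forall y, (forall n, Psi y (m + n) <> None) ->
             exists N, forall k, N <= k -> nbar_le (Psi y (m + k)) (h k)).
  { intro m. set (G := fun y => forall n, Psi y (m + n) <> None).
    assert (HGU : Ufin_nested T G).
    { apply Ufin_O_Gamma_nested, HG. exists (fun n y => Psi y (m + n) <> None).
      split; [| intro y; reflexivity].
      intro n. apply (open_coord_preimage T Psi HPsi (m + n) (fun a => a <> None)).
      intros Hn; contradiction (Hn eq_refl). }
    destruct (Ufin_nested_eventually T G HGU (fun k n y => Psi y (m + k) = Some n)) as [h Hh].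
    - intros k n. apply (open_coord_preimage T Psi HPsi (m + k) (fun a => a = Some n)).
      intros H; discriminate H.
    - intros k y Gy. destruct (Psi y (m + k)) eqn:E; [eauto | exfalso; exact (Gy k E)].
    - exists h. intros y Gy. destruct (Hh y Gy) as [N HN]. exists N. intros k Hk.
      destruct (HN k Hk) as [n [Hn ->]]. exact Hn. }
  apply choice in Htail; destruct Htail as [h Hh].
  destruct (diagonal_dominates h) as [g Hg].
  exists g. intros f [x ->]. destruct (proj1 HPsi x) as [M HM].
  destruct (Hh M x) as [N HN]; [intro n; apply HM; lia |].
  exists (M + N). intros n Hn. specialize (HN (n - M) ltac:(lia)). specialize (Hg M (n - M)).
  replace (M + (n - M)) with n in HN, Hg by lia.
  destruct (Psi x n); simpl in *; lia.
Qed.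

Section SigmaMarker.
Context {X : Type} (O : nat -> X -> Prop) (D : nat -> nat -> X -> Prop) (Psi : X -> nat -> nbar).
Hypothesis HD : forall n x, (forall i, i < n -> O i x) <-> exists j, D n j x.
Hypothesis HPsi : forall x c, Psi x c = None <->
  ~ O (fst (Cantor.of_nat c)) x /\ least (D (fst (Cantor.of_nat c))) x (snd (Cantor.of_nat c)).

Lemma first_miss_exists x : ~ (forall n, O n x) ->
  exists n j, least (fun i y => ~ O i y) x n /\ least (D n) x j.
Proof.
  intros Hx. apply not_all_ex_not in Hx.
  destruct (least_exists (fun i y => ~ O i y) x Hx) as [n Hn].
  assert (HP : exists j, D n j x) by (apply HD; intros i Hi; apply NNPP, (proj2 Hn i Hi)).
  destruct (least_exists (D n) x HP) as [j Hj]. eauto.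
Qed.

Lemma marker_None_iff x n j : least (fun i y => ~ O i y) x n -> least (D n) x j ->
  forall c, Psi x c = None <-> c = Cantor.to_nat (n, j).
Proof.
  intros Hn Hj c. rewrite HPsi. split.
  - intros [Hmiss Hl].
    assert (En : fst (Cantor.of_nat c) = n).
    { apply (least_unique (fun i y => ~ O i y) x); [split | exact Hn]; [exact Hmiss |].
      intros q Hq Hnq. apply Hnq, (proj2 (HD _ x) (ex_intro _ _ (proj1 Hl))), Hq. }
    rewrite En in Hl.
    assert (Ej : snd (Cantor.of_nat c) = j) by (apply (least_unique (D n) x); assumption).
    rewrite <- (Cantor.cancel_to_of c), (surjective_pairing (Cantor.of_nat c)), En, Ej.
    reflexivity.
  - intros ->. rewrite Cantor.cancel_of_to. split; [exact (proj1 Hn) | exact Hj].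
Qed.

Lemma marker_EF x : EF (Psi x).
Proof.
  destruct (classic (forall n, O n x)) as [Hx | Hx].
  - exists 0. intros c _ E. apply HPsi in E. apply (proj1 E), Hx.
  - destruct (first_miss_exists x Hx) as [n [j [Hn Hj]]].
    exists (S (Cantor.to_nat (n, j))). intros c Hc E.
    apply (marker_None_iff x n j Hn Hj) in E. lia.
Qed.

Lemma marker_None_beyond x m j : D m j x -> ~ (forall n, O n x) ->
  exists c, m <= c /\ Psi x c = None.
Proof.
  intros Hm Hx. destruct (first_miss_exists x Hx) as [n [j' [Hn Hj']]].
  exists (Cantor.to_nat (n, j')). split.
  - assert (m <= n).
    { destruct (le_lt_dec m n) as [Hle | Hlt]; [exact Hle |].
      exfalso. apply (proj1 Hn), (proj2 (HD m x)); eauto. }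
    pose proof (Cantor.to_nat_non_decreasing n j'). lia.
  - apply (marker_None_iff x n j' Hn Hj'). reflexivity.
Qed.

End SigmaMarker.

Section ClopenBase.
Context {X : Type} (T : topology X).
Hypothesis Hclopen : forall U, open T U ->
  exists C : nat -> X -> Prop, (forall n, clopen T (C n)) /\ (forall x, U x <-> exists n, C n x).

Lemma closed_level_map (A : X -> Prop) : closed T A ->
  exists f : X -> nbar, (forall p, clopen T (fun x => f x = Some p)) /\
    forall x, f x = None <-> A x.
Proof.
  intros HA. destruct (Hclopen _ HA) as [C [HC HCA]].
  destruct (first_index_map T C HC) as [f [Hlev [HNone _]]].
  exists f. split; [exact Hlev |]. intro x. rewrite HNone, <- HCA.
  split; [apply NNPP | tauto].
Qed.

Lemma bounded_Ufin_nested :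
  (forall Psi, continuous_to_EF T Psi -> bounded (fun f => exists x, f = Psi x)) ->
  Ufin_nested T (fun _ => True).
Proof.
  intros Hbd U HU Hcov [Hn _].
  destruct (choice (fun (kn : nat * nat) (C : nat -> X -> Prop) => (forall j, clopen T (C j)) /\
              forall x, U (fst kn) (snd kn) x <-> exists j, C j x)) as [C HC];
    [intros [k n]; apply Hclopen, HU |].
  set (Dk := fun k p => C (k, fst (Cantor.of_nat p)) (snd (Cantor.of_nat p))).
  destruct (choice (fun k (f : X -> nbar) => (forall p, clopen T (fun x => f x = Some p)) /\
              (forall x, f x = None <-> ~ exists p, Dk k p x) /\
              (forall x p, f x = Some p -> Dk k p x))) as [f Hf];
    [intro k; apply first_index_map; intro p; apply HC |].
  assert (Hfin : forall x k, f k x <> None).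
  { intros x k E. apply (proj1 (proj1 (proj2 (Hf k)) x) E).
    destruct (Hcov k x I) as [n Hx]. apply (HC (k, n)) in Hx. destruct Hx as [j Hj].
    exists (Cantor.to_nat (n, j)). unfold Dk. rewrite Cantor.cancel_of_to. exact Hj. }
  destruct (Hbd (fun x k => f k x)) as [g Hg].
  { apply continuous_to_EF_of_clopen_levels; [| intros k; apply Hf].
    intro x. exists 0. intros k _. apply Hfin. }
  exists g. intros x _. destruct (Hg _ (ex_intro _ x eq_refl)) as [N HN].
  exists N. intros k Hk. specialize (HN k Hk). simpl in HN.
  destruct (f k x) as [p |] eqn:E; [| contradiction].
  apply (Hn k (fst (Cantor.of_nat p))); [pose proof (fst_of_nat_le p); simpl in HN; lia |].
  apply (HC (k, fst (Cantor.of_nat p))). exists (snd (Cantor.of_nat p)).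
  apply (proj2 (proj2 (Hf k)) x p E).
Qed.

(* A point outside [G = ∩ O n] gets the value infinity exactly at the coordinate coding
   (first n with x ∉ O n, first clopen piece of O 0 ∩ ... ∩ O (n-1) containing x). *)
Lemma bounded_sigma_space :
  (forall Psi, continuous_to_EF T Psi -> bounded (fun f => exists x, f = Psi x)) ->
  sigma_space T.
Proof.
  intros Hbd G [O [HO HG]].
  destruct (choice (fun n (Dn : nat -> X -> Prop) => (forall j, clopen T (Dn j)) /\
              forall x, (forall i, i < n -> O i x) <-> exists j, Dn j x)) as [D HD];
    [intro n; apply Hclopen, open_forall_lt; intros i _; apply HO |].
  set (A := fun c x => ~ O (fst (Cantor.of_nat c)) x /\
                       least (D (fst (Cantor.of_nat c))) x (snd (Cantor.of_nat c))).
  destruct (choice (fun c (f : X -> nbar) => (forall p, clopen T (fun x => f x = Some p)) /\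
              forall x, f x = None <-> A c x)) as [f Hf].
  { intro c. apply closed_level_map, closed_and; [apply closed_compl, HO |].
    apply least_clopen. intro j. apply HD. }
  set (Psi := fun x c => f c x).
  assert (HPsi : forall x c, Psi x c = None <-> A c x) by (intros x c; apply Hf).
  assert (HDn : forall n x, (forall i, i < n -> O i x) <-> exists j, D n j x) by (intro n; apply HD).
  assert (Hcont : continuous_to_EF T Psi).
  { apply continuous_to_EF_of_clopen_levels; [| intros c; apply Hf].
    intro x. apply (marker_EF O D Psi HDn HPsi). }
  destruct (Hbd Psi Hcont) as [g Hg].
  exists (fun k x => (forall c, fst (Cantor.of_nat k) <= c -> nbar_le (Psi x c) (g c)) /\
                    D (fst (Cantor.of_nat k)) (snd (Cantor.of_nat k)) x).
  split.
  - intro k. apply closed_and; [apply closed_tail_bounded, Hcont | apply HD].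
  - intro x. rewrite HG. split.
    + intros Gx. destruct (Hg (Psi x) (ex_intro _ x eq_refl)) as [N HN].
      destruct (proj1 (HDn N x) (fun i _ => Gx i)) as [j Hj].
      exists (Cantor.to_nat (N, j)). rewrite Cantor.cancel_of_to. split; [exact HN | exact Hj].
    + intros [k [Hk Hj]]. apply NNPP; intros Hx.
      destruct (marker_None_beyond O D Psi HDn HPsi x _ _ Hj Hx) as [c [Hc E]].
      specialize (Hk c Hc). rewrite E in Hk. exact Hk.
Qed.

End ClopenBase.

Lemma sigma_space_Ufin_nested {X : Type} (T : topology X) :
  Ufin_nested T (fun _ => True) -> sigma_space T -> forall Y, Ufin_nested T Y.
Proof.
  intros HX Hs Y U HU Hcov [Hn Hk].
  destruct (Hs (fun x => forall k, exists n, U k n x)) as [F [HF HFG]].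
  { exists (fun k x => exists n, U k n x). split; [intro k; apply open_exists, HU | reflexivity]. }
  destruct (HX (fun k n x => U k n x \/ forall m, m <= k -> ~ F m x)) as [h Hh].
  - intros k n. apply open_or; [apply HU | apply open_forall_le; intros m _; apply HF].
  - intros k x _. destruct (classic (exists m, m <= k /\ F m x)) as [[m [_ Fm]] | Hnot].
    + destruct (proj2 (HFG x) (ex_intro _ m Fm) k) as [n HUn]. exists n. left; exact HUn.
    + exists 0. right. intros m Hm Fm. apply Hnot; eauto.
  - split.
    + intros k n n' x Hnn' [HUn | Hout]; [left; apply (Hn k n); assumption | right; exact Hout].
    + intros k k' n x Hkk' [HUn | Hout]; [left; apply (Hk k k' n); assumption |].
      right. intros m Hm. apply Hout. lia.
  - exists h. intros y Yy.
    destruct (proj1 (HFG y) (fun k => Hcov k y Yy)) as [m Fm].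
    destruct (Hh y I) as [N HN]. exists (max N m). intros k Hmk.
    destruct (HN k ltac:(lia)) as [HUk | Hout]; [exact HUk |].
    exfalso. apply (Hout m); [lia | exact Fm].
Qed.

Theorem mainTheorem3 (X : Type) (T : topology X)
  (Hclopen : forall U, open T U ->
     exists C : nat -> X -> Prop, (forall n, clopen T (C n)) /\
       (forall x, U x <-> exists n, C n x)) :
  ((forall Y : X -> Prop, Ufin_O_Gamma T Y) <->
   (forall Y : X -> Prop, Gdelta T Y -> Ufin_O_Gamma T Y)) /\
  ((forall Y : X -> Prop, Gdelta T Y -> Ufin_O_Gamma T Y) <->
   (forall Psi : X -> nat -> nbar, continuous_to_EF T Psi ->
      bounded (fun f => exists x, f = Psi x))) /\
  ((forall Psi : X -> nat -> nbar, continuous_to_EF T Psi ->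
      bounded (fun f => exists x, f = Psi x)) <->
   (Ufin_O_Gamma T (fun _ => True) /\ sigma_space T)).
Proof.
  assert (H12 : (forall Y, Ufin_O_Gamma T Y) -> forall Y, Gdelta T Y -> Ufin_O_Gamma T Y)
    by auto.
  pose proof (Gdelta_Ufin_bounded T) as H23.
  assert (H34 : (forall Psi, continuous_to_EF T Psi -> bounded (fun f => exists x, f = Psi x)) ->
                Ufin_O_Gamma T (fun _ => True) /\ sigma_space T).
  { intros H. split.
    - apply Ufin_nested_O_Gamma, bounded_Ufin_nested; assumption.
    - apply bounded_sigma_space; assumption. }
  assert (H41 : Ufin_O_Gamma T (fun _ => True) /\ sigma_space T -> forall Y, Ufin_O_Gamma T Y).
  { intros [HX Hs] Y. apply Ufin_nested_O_Gamma, sigma_space_Ufin_nested;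
      [apply Ufin_O_Gamma_nested |]; assumption. }
  split; [| split]; split.
  - exact H12.
  - intros H. apply H41, H34, H23, H.
  - exact H23.
  - intros H. apply H12, H41, H34, H.
  - exact H34.
  - intros H. apply H23, H12, H41, H.
Qed.
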